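(* Let $p\in(0,1)$, $q=1-p$, $\lambda=p/q$, $\alpha\in(0,1)$. Let $J^B_0,J^B_1,\dots$ be i.i.d. with the discrete Mittag--Leffler distribution of type B, i.e. $J^B\overset{d}{=}1+\sum_{k=1}^{M-1}Z_k$ with $M$ geometric, $P(M=k)=pq^{k-1}$, independent of i.i.d. Sibuya$(\alpha)$ variables $Z_k$ ($P(Z=k)=(-1)^{k-1}\binom{\alpha}{k}$, $k\in\mathbb{N}$); equivalently $\mathbb{E}u^{J^B}=\dfrac{u}{1+\frac{q}{p}(1-u)^\alpha}$. Let $N_B(t)=\max\{n\in\mathbb{N}_0:J^B_0+\dots+J^B_{n-1}\le t\}$, $t\in\mathbb{N}_0$, and $p_k(t)=P(N_B(t)=k)$, with $p_k(t)=0$ for $t<0$. Then, with initial condition $p_k(0)=\delta_{0k}$, the state probabilities solve for $t\in\mathbb{N}_0$: $$(I-\mathcal{B})^\alpha p_k(t)=-\lambda p_k(t)+\lambda p_{k-1}(t-1),\quad k\ge1,$$ $$(I-\mathcal{B})^\alpha p_0(t)-(-1)^t\binom{\alpha-1}{t}=-\lambda p_0(t)+\lambda\delta_{0t}.$$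
   Context: $\mathcal{B}$ is the backward shift in time, $\mathcal{B}p(t)=p(t-1)$, and $(I-\mathcal{B})^\alpha p(t)=\sum_{k=0}^\infty\binom{\alpha}{k}(-1)^kp(t-k)$ is the fractional power of the discrete derivative. $\binom{x}{k}=x(x-1)\cdots(x-k+1)/k!$; $\delta$ is the Kronecker delta. *)

From HB Require Import structures.
From mathcomp Require Import all_boot all_order all_algebra.
From mathcomp Require Import all_classical all_reals all_analysis.
Set Implicit Arguments. Unset Strict Implicit. Unset Printing Implicit Defensive.
Import Order.TTheory GRing.Theory Num.Theory.
Import numFieldNormedType.Exports.
Local Open Scope classical_set_scope.
Local Open Scope ring_scope.

Section Defs.
Variable R : realType.

Definition gbinom (x : R) (k : nat) : R :=
  (\prod_(i < k) (x - i%:R)) / (k`!)%:R.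

(* fractional power of the discrete derivative, applied to f : int -> R at t:
   (I - B)^a f(t) = sum_{k>=0} binom(a,k) (-1)^k f(t-k)  (infinite series) *)
Definition fracdiff (a : R) (f : int -> R) (t : int) : R :=
  limn (series (fun k : nat => gbinom a k * (-1) ^+ k * f (t - k%:Z))).

Definition sibuya (a : R) (k : nat) : R :=
  if k is 0 then 0 else (-1) ^+ k.-1 * gbinom a k.

Definition dconv (f g : nat -> R) (n : nat) : R :=
  \sum_(i < n.+1) f i * g (n - i)%N.

Fixpoint dconv_pow (f : nat -> R) (m : nat) : nat -> R :=
  match m with
  | 0 => fun n => if n == 0%N then 1 else 0
  | m'.+1 => dconv f (dconv_pow f m')
  end.

(* pmf of the discrete Mittag-Leffler distribution of type B:
   J = 1 + Z_1 + ... + Z_{M-1},  P(M = m) = p q^(m-1), m >= 1,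
   M independent of the iid Sibuya(a) Z_k; hence
   P(J = n) = sum_{m>=1} p q^(m-1) P(Z_1+...+Z_{m-1} = n-1). *)
Definition mlB_pmf (p a : R) (n : nat) : R :=
  if n is n'.+1 then
    limn (series (fun j : nat => p * (1 - p) ^+ j * dconv_pow (sibuya a) j n'))
  else 0.

End Defs.

Definition iid_indep {d : measure_display} {T : measurableType d} {R : realType}
  (P : probability T R) (J : nat -> T -> nat) : Prop :=
  forall (s : seq nat) (v : nat -> nat), uniq s ->
    P (\bigcap_(i in [set` s]) [set w | J i w = v i]) =
    (\prod_(i <- s) P [set w | J i w = v i])%E.

Definition psum (T : Type) (J : nat -> T -> nat) (n : nat) (w : T) : nat :=
  \sum_(i < n) J i w.

(* state probabilities p_k(t) = P(N(t) = k), with N(t) = max{n : S_n <= t};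
   since S is nondecreasing, {N(t) = k} = {S_k <= t < S_{k+1}};
   p_k(t) = 0 for t < 0 *)
Definition stateprob {d : measure_display} {T : measurableType d} {R : realType}
  (P : probability T R) (J : nat -> T -> nat) (k : nat) (t : int) : R :=
  match t with
  | Posz t' => fine (P [set w | (psum J k w <= t')%N /\ (t' < psum J k.+1 w)%N])
  | Negz _ => 0
  end.

From HB Require Import structures.
From mathcomp Require Import all_boot all_order all_algebra.
From mathcomp Require Import all_classical all_reals all_analysis.
From mathcomp Require Import zify ring.
Import Order.TTheory GRing.Theory Num.Theory.
Import numFieldNormedType.Exports.
Local Open Scope classical_set_scope.
Local Open Scope ring_scope.

(* Work with generating functions truncated modulo X^N, so that every
   power-series identity becomes a finite statement about the coefficients
   below N.  If F is the generating function of the jump law, P(S_k <= t) is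
   the t-th coefficient of F^k / (1 - X), hence p_k(t) is that of
   (F^k - F^(k+1)) / (1 - X).  The type B law is the geometric compound
   1 + Z_1 + ... + Z_(M-1) and the Sibuya generating function is
   1 - (1 - X)^a, which gives ((1 - X)^a + lam) F = lam X.  Since
   (I - B)^a g(t), for g vanishing at negative times, is the t-th coefficient
   of (1 - X)^a G, multiplying the generating function of p_(k+1) by
   (1 - X)^a + lam yields lam X times that of p_k, while for p_0 it yields
   (1 - X)^a / (1 - X) + lam, whose t-th coefficient is
   (-1)^t binom(a-1, t) + lam [t = 0]. *)

Section TruncatedSeries.
Context {R : nzRingType}.
Implicit Types (N : nat) (u v w : {poly R}) (g : nat -> R).

Definition trunc_gf N g : {poly R} := \poly_(i < N) g i.

Lemma coef_trunc_gf N g i : (i < N)%N -> (trunc_gf N g)`_i = g i.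
Proof. by move=> iN; rewrite coef_poly iN. Qed.

Definition eqmodX N u v := forall i, (i < N)%N -> u`_i = v`_i.

Lemma eqmodX_refl N u : eqmodX N u u.
Proof. by []. Qed.

Lemma eqmodX_sym {N u v} : eqmodX N u v -> eqmodX N v u.
Proof. by move=> uv i iN; rewrite uv. Qed.

Lemma eqmodX_trans {N u v w} : eqmodX N u v -> eqmodX N v w -> eqmodX N u w.
Proof. by move=> uv vw i iN; rewrite uv ?vw. Qed.

Lemma eqmodXD {N u u' v v'} :
  eqmodX N u u' -> eqmodX N v v' -> eqmodX N (u + v) (u' + v').
Proof. by move=> uu vv i iN; rewrite !coefD uu ?vv. Qed.

Lemma eqmodXB {N u u' v v'} :
  eqmodX N u u' -> eqmodX N v v' -> eqmodX N (u - v) (u' - v').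
Proof. by move=> uu vv i iN; rewrite !coefB uu ?vv. Qed.

Lemma eqmodXM {N u u' v v'} :
  eqmodX N u u' -> eqmodX N v v' -> eqmodX N (u * v) (u' * v').
Proof.
move=> uu vv i iN; rewrite !coefM; apply: eq_bigr => j _.
have ji : (j <= i)%N by rewrite -ltnS ltn_ord.
by rewrite uu ?vv //; apply: leq_ltn_trans iN; rewrite ?leq_subr.
Qed.

Lemma eqmodXMl {N} u {v v'} : eqmodX N v v' -> eqmodX N (u * v) (u * v').
Proof. exact: eqmodXM. Qed.

Lemma eqmodXMr {N u u'} v : eqmodX N u u' -> eqmodX N (u * v) (u' * v).
Proof. by move=> uu; apply: eqmodXM. Qed.

Lemma eqmodX_exp_nilpotent {N u} : u`_0 = 0 -> eqmodX N (u ^+ N) 0.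
Proof.
move=> u0; have take1u : take_poly 1 u = 0.
  by apply/polyP => -[|i]; rewrite coef_take_poly coef0.
rewrite -(poly_take_drop 1 u) take1u add0r exprMn_comm; last first.
  exact: commr_polyXn.
by move=> i iN; rewrite -exprM mul1n coefMXn iN coef0.
Qed.

Lemma eqmodX_geometric {N u} :
  u`_0 = 0 -> eqmodX N ((1 - u) * \sum_(j < N) u ^+ j) 1.
Proof.
move=> u0; rewrite -[1 - u]opprB mulNr -subrX1 opprB => i iN.
by rewrite coefB (eqmodX_exp_nilpotent u0 _ iN) coef0 subr0.
Qed.

Definition cumul N := trunc_gf N (fun=> 1).

Lemma coefM_cumul N u t :
  (t < N)%N -> (u * cumul N)`_t = \sum_(j < t.+1) u`_j.
Proof.
move=> tN; rewrite coefM; apply: eq_bigr => j _.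
by rewrite coef_trunc_gf ?mulr1 // (leq_ltn_trans (leq_subr _ _) tN).
Qed.

Lemma cumul_geometric N : eqmodX N ((1 - 'X) * cumul N) 1.
Proof.
move=> t tN; rewrite mulrBl mul1r coefB coefXM coef1 coef_trunc_gf //.
case: t tN => [|t] tN /=; first by rewrite subr0.
by rewrite coef_trunc_gf ?subrr // ltnW.
Qed.

End TruncatedSeries.

Section ConvolutionCdf.
Context {R : comNzRingType}.
Implicit Types (f : nat -> R) (k N t : nat).

(* Jumps are restricted to 'I_N, which loses nothing as long as t < N. *)
Definition conv_cdf f k N t : R :=
  \sum_(v : {ffun 'I_k -> 'I_N} | (\sum_(i < k) (v i : nat) <= t)%N)
    \prod_(i < k) f (v i).

Lemma trunc_gf_exp f k N :
  trunc_gf N f ^+ k = \sum_(v : {ffun 'I_k -> 'I_N})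
    (\prod_(i < k) f (v i))%:P * 'X^(\sum_(i < k) (v i : nat)).
Proof.
rewrite -[k in LHS]card_ord -prodr_const /trunc_gf poly_def bigA_distr_bigA /=.
apply: eq_bigr => v _; rewrite rmorph_prod -prodrXr -big_split /=.
by apply: eq_bigr => i _; rewrite mul_polyC.
Qed.

Lemma conv_cdf_coef f k N t :
  (t < N)%N -> conv_cdf f k N t = (trunc_gf N f ^+ k * cumul N)`_t.
Proof.
move=> tN; rewrite coefM_cumul // trunc_gf_exp.
under eq_bigr do rewrite coef_sum.
rewrite exchange_big /conv_cdf big_mkcond; apply: eq_bigr => v _.
under eq_bigr => j _ do rewrite coefCM coefXn.
rewrite -mulr_sumr (eq_bigr (fun j : 'I_t.+1 =>
  if (j : nat) == \sum_(i < k) (v i : nat) then 1 else 0));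
  last by move=> j _; case: eqP.
rewrite -big_mkcond (big_ord1_eq _ (fun=> 1)) ltnS.
by case: ifP; rewrite ?mulr1 ?mulr0.
Qed.

End ConvolutionCdf.

Section GeneralizedBinomial.
Context {R : realType}.
Implicit Types (x : R) (n : nat).

Lemma gbinom0 x : gbinom x 0 = 1.
Proof. by rewrite /gbinom big_ord0 fact0 divr1. Qed.

Lemma gbinomS x n : gbinom x n.+1 = gbinom x n * (x - n%:R) / n.+1%:R.
Proof.
rewrite /gbinom big_ord_recr factS natrM /=.
have fact_neq0 : n`!%:R != 0 :> R by rewrite pnatr_eq0 -lt0n fact_gt0.
by field; rewrite fact_neq0 andbT addrC natr1 pnatr_eq0.
Qed.

Lemma gbinomMsub x n : gbinom x n * (x - n%:R) = x * gbinom (x - 1) n.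
Proof.
rewrite /gbinom mulrAC [x * _]mulrA.
have -> : \prod_(i < n) (x - i%:R) * (x - n%:R) = \prod_(i < n.+1) (x - i%:R).
  by rewrite big_ord_recr.
rewrite big_ord_recl /= subr0; congr (_ * _ / _); apply: eq_bigr => i _.
by rewrite /bump /= add1n -addn1 natrD opprD addrA addrAC.
Qed.

Lemma gbinom_pascal x n : gbinom x n.+1 = gbinom (x - 1) n.+1 + gbinom (x - 1) n.
Proof.
rewrite !gbinomS gbinomMsub -addn1 natrD; field.
by rewrite natr1 pnatr_eq0.
Qed.

Definition fracdiff_coef x n : R := gbinom x n * (-1) ^+ n.

Lemma sum_fracdiff_coef x n :
  \sum_(j < n.+1) fracdiff_coef x j = (-1) ^+ n * gbinom (x - 1) n.
Proof.
elim: n => [|n IH]; first by rewrite big_ord1 /fracdiff_coef !gbinom0 expr0.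
by rewrite big_ord_recr /= IH /fracdiff_coef gbinom_pascal exprS; ring.
Qed.

End GeneralizedBinomial.

Section FractionalDifference.
Context {R : realType}.

Lemma limn_series_eventually0 (u : nat -> R) K :
  (forall j, (K <= j)%N -> u j = 0) -> limn (series u) = \sum_(j < K) u j.
Proof.
move=> u0; apply: lim_near_cst => //; exists K => // m /= Km.
rewrite /series /= big_mkord (big_ord_widen m u Km) [RHS]big_mkcond /=.
by apply: eq_bigr => j _; case: ltnP => // /u0 ->.
Qed.

Definition trunc_gfz N (g : int -> R) := trunc_gf N (fun i : nat => g i%:Z).

Definition fracdiff_gf (a : R) N := trunc_gf N (fracdiff_coef a).

Lemma fracdiffE a (g : int -> R) (t : nat) : (forall n, g (Negz n) = 0) ->
  fracdiff a g t = (fracdiff_gf a t.+1 * trunc_gfz t.+1 g)`_t.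
Proof.
move=> g_neg; rewrite /fracdiff (limn_series_eventually0 _ t.+1); last first.
  move=> j tj; have -> : t%:Z - j%:Z = Negz (j - t.+1) by rewrite NegzE; lia.
  by rewrite g_neg mulr0.
rewrite coefM; apply: eq_bigr => j _.
have jt : (j <= t)%N by rewrite -ltnS.
by rewrite !coef_trunc_gf ?ltnS ?leq_subr // subzn.
Qed.

Lemma coefXM_trunc_gfz N (g : int -> R) t : g (-1) = 0 -> (t < N)%N ->
  ('X * trunc_gfz N g)`_t = g (t%:Z - 1).
Proof.
move=> g_neg1 tN; rewrite coefXM; case: t tN => [|t] tN //=.
by rewrite coef_trunc_gf ?(ltnW tN) // -addn1 PoszD addrK.
Qed.

End FractionalDifference.

Section ConvolutionPowers.
Context {R : realType}.
Implicit Types (g h : nat -> R) (N : nat).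

Lemma trunc_gf_dconv N g h :
  eqmodX N (trunc_gf N (dconv g h)) (trunc_gf N g * trunc_gf N h).
Proof.
move=> i iN; rewrite coef_trunc_gf // coefM; apply: eq_bigr => j _.
have ji : (j <= i)%N by rewrite -ltnS ltn_ord.
by rewrite !coef_trunc_gf // (leq_ltn_trans _ iN) ?leq_subr.
Qed.

Lemma trunc_gf_dconv_pow N g j :
  eqmodX N (trunc_gf N (dconv_pow g j)) (trunc_gf N g ^+ j).
Proof.
elim: j => [|j IH].
  by move=> i iN; rewrite coef_trunc_gf // coef1 /=; case: (i == 0%N).
rewrite exprS; apply: eqmodX_trans _ (eqmodXMl _ IH); exact: trunc_gf_dconv.
Qed.

Lemma dconv_pow_eq0 g j n : g 0 = 0 -> (n < j)%N -> dconv_pow g j n = 0.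
Proof.
move=> g0; elim: j n => [//|j IH] n nj /=.
rewrite /dconv big1 // => -[[|i] /= ilt _]; first by rewrite g0 mul0r.
by rewrite IH ?mulr0 //; lia.
Qed.

End ConvolutionPowers.

Section MittagLefflerB.
Context {R : realType}.
Variables (p a : R).
Hypothesis p_neq1 : p != 1.

Local Notation q := (1 - p).
Local Notation lam := (p / (1 - p)).

Lemma sibuya_gf N : eqmodX N (trunc_gf N (sibuya a)) (1 - fracdiff_gf a N).
Proof.
move=> i iN; rewrite coefB coef1 !coef_trunc_gf // /fracdiff_coef /sibuya.
case: i iN => [|i] _ /=; first by rewrite gbinom0 expr0 mulr1 subrr.
by rewrite exprS mulN1r mulrN sub0r opprK mulrC.
Qed.

Lemma mlB_pmfE n M : (n < M)%N ->
  mlB_pmf p a n.+1 = \sum_(j < M) p * q ^+ j * dconv_pow (sibuya a) j n.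
Proof.
move=> nM; rewrite /mlB_pmf (limn_series_eventually0 _ M) // => j Mj.
by rewrite dconv_pow_eq0 ?mulr0 // (leq_trans nM).
Qed.

Lemma mlB_gf N : eqmodX N (trunc_gf N (mlB_pmf p a))
  ('X * (p%:P * \sum_(j < N) (q%:P * trunc_gf N (sibuya a)) ^+ j)).
Proof.
move=> i iN; rewrite coef_trunc_gf // coefXM; case: i iN => [//|n] nN.
rewrite (mlB_pmfE _ _ (ltnW nN)) /= coefCM coef_sum mulr_sumr.
apply: eq_bigr => j _.
rewrite exprMn -rmorphXn /= coefCM -(trunc_gf_dconv_pow _ _ _ _ (ltnW nN)).
by rewrite coef_trunc_gf ?mulrA // ltnW.
Qed.

Lemma mlB_gf_fracdiff N :
  eqmodX N ((fracdiff_gf a N + lam%:P) * trunc_gf N (mlB_pmf p a)) (lam%:P * 'X).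
Proof.
set S := trunc_gf N (sibuya a); set A := fracdiff_gf a N.
set G := p%:P * \sum_(j < N) (q%:P * S) ^+ j.
have q_neq0 : q != 0 by rewrite subr_eq0 eq_sym.
have qS0 : (q%:P * S)`_0 = 0 by rewrite coefCM coef_poly /= if_same mulr0.
have geometric : eqmodX N ((1 - q%:P * S) * G) p%:P.
  by rewrite /G mulrCA -{2}[p%:P]mulr1; exact/eqmodXMl/eqmodX_geometric.
have pqA : eqmodX N (p%:P + q%:P * A) (1 - q%:P * S).
  move=> i iN; rewrite coefD coefB !coefCM (sibuya_gf _ _ iN) coefB coef1 coefC.
  by case: (i == 0%N); rewrite /= ?mulr1n ?mulr0n; ring.
have E : (A + lam%:P) * ('X * G) = (q^-1)%:P * 'X * ((p%:P + q%:P * A) * G).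
  have -> : lam%:P = (q^-1)%:P * p%:P by rewrite -polyCM mulrC.
  have {1}-> : A = (q^-1)%:P * q%:P * A by rewrite -polyCM mulVf ?mul1r.
  ring.
apply: eqmodX_trans (eqmodXMl _ (mlB_gf N)) _; rewrite E -mulrA => i iN.
rewrite !coefCM coefXM coefX; case: i iN => [|i] iN /=.
  by rewrite mulr0n !mulr0.
rewrite (eqmodX_trans (eqmodXMr _ pqA) geometric _ (ltnW iN)) coefC.
by case: i {iN} => [|i] /=; rewrite ?mulr0n ?mulr0 // mulr1 mulrC.
Qed.

End MittagLefflerB.

Section RenewalCounting.
Context {R : realType} {d : measure_display} {T : measurableType d}.
Context {P : probability T R} {J : nat -> T -> nat} {f : nat -> R}.
Hypothesis Jmeas : forall i n, measurable [set w | J i w = n].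
Hypothesis Jdist : forall i n, P [set w | J i w = n] = (f n)%:E.
Hypothesis Jindep : iid_indep P J.

Definition ffun_nat {k N} (v : {ffun 'I_k -> 'I_N}) (i : nat) : nat :=
  if insub i is Some j then nat_of_ord (v j) else 0%N.

Lemma ffun_natE k N (v : {ffun 'I_k -> 'I_N}) (i : 'I_k) : ffun_nat v i = v i.
Proof. by rewrite /ffun_nat valK. Qed.

(* Empty unless the jumps v sum to at most t, so that these events partition
   [set w | psum J k w <= t]. *)
Definition jumps_event {k N} t (v : {ffun 'I_k -> 'I_N}) : set T :=
  if (\sum_(i < k) (v i : nat) <= t)%N then
    \bigcap_(i in [set` iota 0 k]) [set w | J i w = ffun_nat v i]
  else set0.

Lemma measurable_jumps_event k N t v : measurable (@jumps_event k N t v).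
Proof.
rewrite /jumps_event; case: ifP => _; last exact: measurable0.
apply: fin_bigcap_measurable; last by move=> i _; apply: Jmeas.
by apply/finite_seqP; exists (iota 0 k).
Qed.

Lemma psum_le_bigcup k N t : (t < N)%N ->
  [set w | (psum J k w <= t)%N] =
  \bigcup_(v in [set: {ffun 'I_k -> 'I_N}]) jumps_event t v.
Proof.
move=> tN; apply/seteqP; split => w /=.
- move=> Jw; have J_lt (i : 'I_k) : (J i w < N)%N.
    apply: leq_ltn_trans tN; apply: leq_trans Jw.
    by rewrite /psum (bigD1 i) //= leq_addr.
  exists [ffun i => Ordinal (J_lt i)] => //; rewrite /jumps_event.
  under eq_bigr do rewrite ffunE /=.
  rewrite Jw => i /=; rewrite mem_iota add0n => ik.
  by rewrite -[i]/(nat_of_ord (Ordinal ik)) ffun_natE ffunE.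
- case=> v _; rewrite /jumps_event; case: ifP => // vt Jv.
  rewrite /psum (leq_trans _ vt) // leq_eqVlt; apply/orP; left.
  apply/eqP/eq_bigr => i _; rewrite -ffun_natE; apply: Jv.
  by rewrite /= mem_iota add0n ltn_ord.
Qed.

Lemma trivIset_jumps_event k N t : trivIset setT (@jumps_event k N t).
Proof.
move=> v v' _ _ [w []]; rewrite /jumps_event.
case: ifP => // _ Jv; case: ifP => // _ Jv'.
apply/ffunP => i; apply/val_inj.
have iI : [set` iota 0 k] (nat_of_ord i) by rewrite /= mem_iota add0n ltn_ord.
by have := Jv _ iI; have := Jv' _ iI; rewrite /= !ffun_natE => <- ->.
Qed.

Lemma prob_psum_le k N t : (t < N)%N ->
  P [set w | (psum J k w <= t)%N] = (conv_cdf f k N t)%:E.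
Proof.
move=> tN; rewrite (psum_le_bigcup k N t tN) measure_fin_bigcup //; first last.
- by move=> v _; apply: measurable_jumps_event.
- exact: trivIset_jumps_event.
- exact: finite_finset.
rewrite (fsbigE (enum {ffun 'I_k -> 'I_N})) ?enum_uniq //; last first.
  by move=> v _; rewrite mem_enum.
rewrite (eq_bigl xpredT); last by move=> v; apply/mem_set.
rewrite big_enum /= -sumEFin [RHS]big_mkcond /=.
apply: eq_bigr => v _; rewrite /jumps_event.
case: ifP => _; last by rewrite measure0.
have -> : iota 0 k = index_iota 0 k by rewrite /index_iota subn0.
rewrite Jindep ?iota_uniq // big_mkord -prodEFin.
by apply: eq_bigr => i _; rewrite Jdist ffun_natE.
Qed.

Lemma measurable_psum_le k t : measurable [set w | (psum J k w <= t)%N].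
Proof.
rewrite (psum_le_bigcup k t.+1 t (ltnSn t)); apply: fin_bigcup_measurable.
  exact: finite_finset.
by move=> v _; apply: measurable_jumps_event.
Qed.

Lemma stateprob_conv_cdf k N t : (t < N)%N ->
  stateprob P J k t = conv_cdf f k N t - conv_cdf f k.+1 N t.
Proof.
move=> tN; rewrite /stateprob.
have -> : [set w | (psum J k w <= t)%N /\ (t < psum J k.+1 w)%N] =
   [set w | (psum J k w <= t)%N] `\` [set w | (psum J k.+1 w <= t)%N].
  by apply/seteqP; split => w /=; rewrite ltnNge => -[-> /negP].
have mSk := measurable_psum_le k t; have mSk1 := measurable_psum_le k.+1 t.
rewrite measureD ?ltey_eq ?fin_num_measure //.
rewrite setIidr; last first.
  by move=> w /= Jw; apply: leq_trans Jw; rewrite /psum big_ord_recr leq_addr.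
rewrite -[RHS]/(fine ((conv_cdf f k N t)%:E - (conv_cdf f k.+1 N t)%:E)).
by congr (fine (_ - _)); apply: prob_psum_le.
Qed.

Lemma stateprob_gf k N :
  eqmodX N (trunc_gfz N (stateprob P J k))
    ((trunc_gf N f ^+ k - trunc_gf N f ^+ k.+1) * cumul N).
Proof.
move=> t tN; rewrite coef_trunc_gf // (stateprob_conv_cdf k N t tN).
by rewrite !conv_cdf_coef // mulrBl coefB.
Qed.

Lemma stateprob_init k : f 0 = 0 -> stateprob P J k 0 = (k == 0%N)%:R.
Proof.
move=> f0; have F0 : trunc_gf 1 f = 0.
  by apply/polyP => -[|i]; rewrite coef_poly //= coef0.
rewrite (stateprob_conv_cdf k 1 0 isT) !conv_cdf_coef // F0.
rewrite exprS !mul0r coef0 subr0 expr0n.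
by case: k => [|k] /=; rewrite ?mul1r ?coef_trunc_gf ?mul0r ?coef0.
Qed.

Context {a lam : R}.
Hypothesis f_fracdiff_gf : forall N,
  eqmodX N ((fracdiff_gf a N + lam%:P) * trunc_gf N f) (lam%:P * 'X).

Local Notation pk := (stateprob P J).

Lemma fracdiff_stateprob_succ k (t : nat) :
  fracdiff a (pk k.+1) t = - lam * pk k.+1 t + lam * pk k (t%:Z - 1).
Proof.
set N := t.+1; set F := trunc_gf N f; set A := fracdiff_gf a N.
have gf_succ : eqmodX N ((A + lam%:P) * trunc_gfz N (pk k.+1))
                         (lam%:P * ('X * trunc_gfz N (pk k))).
  apply: eqmodX_trans (eqmodXMl _ (stateprob_gf k.+1 N)) _.
  have -> : (A + lam%:P) * ((F ^+ k.+1 - F ^+ k.+2) * cumul N) =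
            (A + lam%:P) * F * ((F ^+ k - F ^+ k.+1) * cumul N).
    by rewrite !exprS; ring.
  apply: eqmodX_trans (eqmodXMr _ (f_fracdiff_gf N)) _.
  rewrite -mulrA; apply/eqmodXMl/eqmodXMl/eqmodX_sym.
  exact: stateprob_gf.
have := gf_succ t (ltnSn t).
rewrite mulrDl coefD !coefCM coefXM_trunc_gfz // coef_trunc_gf // -fracdiffE //.
by move=> <-; ring.
Qed.

Lemma fracdiff_stateprob0 (t : nat) :
  fracdiff a (pk 0%N) t - (-1) ^+ t * gbinom (a - 1) t
    = - lam * pk 0%N t + lam * (t == 0%N)%:R.
Proof.
set N := t.+1; set F := trunc_gf N f; set A := fracdiff_gf a N.
have gf_vanish :
    eqmodX N (((A + lam%:P) * F - lam%:P * 'X) * cumul N) (0 * cumul N).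
  by apply: eqmodXMr => i iN; rewrite coefB (f_fracdiff_gf _ _ iN) subrr coef0.
have gf0 : eqmodX N ((A + lam%:P) * trunc_gfz N (pk 0%N))
                    (A * cumul N + lam%:P * 1 - 0 * cumul N).
  apply: eqmodX_trans (eqmodXMl _ (stateprob_gf 0 N)) _.
  have -> : (A + lam%:P) * ((F ^+ 0 - F ^+ 1) * cumul N) =
            A * cumul N + lam%:P * ((1 - 'X) * cumul N)
            - ((A + lam%:P) * F - lam%:P * 'X) * cumul N.
    by rewrite expr0 expr1; ring.
  apply: eqmodXB gf_vanish; apply: eqmodXD (eqmodX_refl _ _) _.
  exact/eqmodXMl/cumul_geometric.
have := gf0 t (ltnSn t).
rewrite mulrDl coefD coefCM coef_trunc_gf // -fracdiffE //.
rewrite mul0r subr0 coefD coefCM coef1 coefM_cumul //.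
under eq_bigr do rewrite coef_trunc_gf ?(leq_trans (ltn_ord _)) //.
rewrite sum_fracdiff_coef => E.
by rewrite -[fracdiff _ _ _](addrK (lam * pk 0%N t)) E; ring.
Qed.

End RenewalCounting.

Theorem mainTheorem8 (R : realType) (p a : R)
  (hp : 0 < p < 1) (ha : 0 < a < 1)
  (d : measure_display) (T : measurableType d) (P : probability T R)
  (J : nat -> T -> nat)
  (Jmeas : forall i n, measurable [set w | J i w = n])
  (Jdist : forall i n, P [set w | J i w = n] = (mlB_pmf p a n)%:E)
  (Jindep : iid_indep P J) :
  let q := 1 - p in
  let lam := p / q in
  let pk := stateprob P J in
  (forall k : nat, pk k 0 = (k == 0%N)%:R) /\
  (forall (k : nat) (t : nat), (1 <= k)%N ->
     fracdiff a (pk k) t%:Z = - lam * pk k t%:Z + lam * pk k.-1 (t%:Z - 1)) /\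
  (forall t : nat,
     fracdiff a (pk 0%N) t%:Z - (-1) ^+ t * gbinom (a - 1) t
       = - lam * pk 0%N t%:Z + lam * (t == 0%N)%:R).
Proof.
move=> q lam pk.
have p_neq1 : p != 1 by case/andP: hp => _ /lt_eqF ->.
have gf := mlB_gf_fracdiff p a p_neq1.
split; first by move=> k; apply: stateprob_init.
split; first by case=> // k t _; apply: (fracdiff_stateprob_succ Jmeas Jdist Jindep gf).
by move=> t; apply: (fracdiff_stateprob0 Jmeas Jdist Jindep gf).
Qed.
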